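(* Let $d>0$, $a\geq 7$ be integers with $\gcd(a,d)=1$ and let $\Gamma_4=\langle a,\,2a+d,\,3a+3d,\,4a+6d\rangle$. For each $1\leq i\leq a-1$ write $i=6\mu_i+q_i$ with $0\leq q_i<6$, and set $(\nu_i,\xi_i)=(1,q_i-3)$ if $q_i\geq 3$ and $(\nu_i,\xi_i)=(0,q_i)$ if $q_i<3$. Then $$\mathrm{Ap}(\Gamma_4,a)=\{0\}\cup\{(4\mu_i+3\nu_i+2\xi_i)a+id \mid 1\leq i\leq a-1\}.$$
   Context: For a numerical semigroup $\Gamma$ and nonzero $a\in\Gamma$, the Apéry set is $\mathrm{Ap}(\Gamma,a)=\{s\in\Gamma\mid s-a\notin\Gamma\}$. *)

From mathcomp Require Import all_boot.
Set Implicit Arguments. Unset Strict Implicit. Unset Printing Implicit Defensive.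

Definition in_semigroup (gens : seq nat) (s : nat) : Prop :=
  exists c : nat -> nat, s = \sum_(i < size gens) c i * nth 0 gens i.

(* Apéry set Ap(Γ, a) = { s ∈ Γ | s - a ∉ Γ } (difference taken in Z,
   so s - a ∈ Γ means s = t + a for some t ∈ Γ). *)
Definition apery (gens : seq nat) (a : nat) (s : nat) : Prop :=
  in_semigroup gens s /\ ~ (exists t, in_semigroup gens t /\ s = t + a).

Definition gamma4 (a d : nat) : seq nat :=
  [:: a; 2 * a + d; 3 * a + 3 * d; 4 * a + 6 * d].

Definition mu (i : nat) : nat := i %/ 6.
Definition qq (i : nat) : nat := i %% 6.
Definition nu (i : nat) : nat := if 3 <= qq i then 1 else 0.
Definition xi (i : nat) : nat := if 3 <= qq i then qq i - 3 else qq i.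

From mathcomp Require Import all_boot zify.

(* Every generator of Γ_4 = <a, 2a+d, 3a+3d, 4a+6d> has the
   form A*a + B*d, and reaching a given d-coefficient B costs at least
   [weight B] = 4μ_B + 3ν_B + 2ξ_B copies of a (use 4a+6d as often as
   possible, then 3a+3d, then 2a+d).  Hence
       Γ_4 = { A*a + B*d | weight B <= A }                   (in_gamma4).  For such sets, coprimality makes the d-coefficient of an
   element determined modulo a, and the gap property forbids trading a's
   for d's, so Ap(S_w, a) = {0} ∪ { w i * a + i*d | 1 <= i < a }
   (apery_weighted).  The theorem follows since [weight] satisfies the gap
   property for a >= 6 (weight_gap), a consequence of 2B <= 3 weight B <=
   2B + 11. *)

Lemma coprime_coeff_dvd {a d X Y B B' : nat} :
  coprime a d -> X * a + B * d = Y * a + B' * d -> B <= B' -> a %| B' - B.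
Proof.
move=> co_ad eq_XY le_BB'.
have eq_k : X * a = Y * a + (B' - B) * d.
  by rewrite mulnBl; move: eq_XY; have := leq_mul le_BB' (leqnn d); lia.
rewrite -(Gauss_dvdl _ co_ad) -(dvdn_addr _ (dvdn_mull Y (dvdnn a))) -eq_k.
exact: dvdn_mull.
Qed.

Section WeightedSemigroup.

Variables (a d : nat) (w : nat -> nat).
Hypothesis a_gt0 : 0 < a.
Hypothesis co_ad : coprime a d.
Hypothesis w0 : w 0 = 0.
Hypothesis w_gap : forall B B', B + a <= B' -> w B < w B'.

Definition weighted (s : nat) : Prop :=
  exists A B, w B <= A /\ s = A * a + B * d.

Definition weighted_apery (s : nat) : Prop :=
  weighted s /\ ~ (exists t, weighted t /\ s = t + a).

Lemma weighted_sub_a_overpaid (A B : nat) :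
  w B < A -> exists t, weighted t /\ A * a + B * d = t + a.
Proof.
move=> lt_wA; exists (A.-1 * a + B * d); split; first by exists A.-1, B; lia.
by rewrite -[in LHS](prednK (leq_ltn_trans (leq0n _) lt_wA)) mulSn; lia.
Qed.

(* Neither is an element whose d-coefficient is at least a: trade a*d
   for d copies of a. *)
Lemma weighted_sub_a_large (B : nat) :
  a <= B -> exists t, weighted t /\ w B * a + B * d = t + a.
Proof.
move=> le_aB; have lt_w := w_gap (B - a) B ltac:(lia).
exists ((w B).-1 * a + d * a + (B - a) * d); split.
  by exists ((w B).-1 + d), (B - a); split; [lia | rewrite mulnDl].
rewrite -[in LHS](prednK (leq_ltn_trans (leq0n _) lt_w)) mulSn mulnBl.
have := leq_mul le_aB (leqnn d); rewrite (mulnC d a); lia.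
Qed.

Lemma weighted_apery_small (i : nat) :
  i < a -> ~ (exists t, weighted t /\ w i * a + i * d = t + a).
Proof.
move=> lt_ia [_ [[A [B [le_wA ->]]] eq_s]].
have eq_s' : w i * a + i * d = (A + 1) * a + B * d by rewrite mulnDl; lia.
case: (ltngtP B i) => [lt_Bi | lt_iB | eq_Bi].
- have := coprime_coeff_dvd co_ad (esym eq_s') (ltnW lt_Bi).
  by move=> /dvdn_leq; lia.
- have /dvdn_leq le_a := coprime_coeff_dvd co_ad eq_s' (ltnW lt_iB).
  have lt_w := w_gap i B ltac:(lia).
  have : (A + 1) * a <= w i * a.
    by have := leq_mul (ltnW lt_iB) (leqnn d); lia.
  by rewrite leq_pmul2r //; lia.
- by move: eq_s'; subst B => /addIn /eqP; rewrite eqn_pmul2r //; lia.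
Qed.

Lemma apery_weighted (s : nat) :
  weighted_apery s <->
  (s = 0 \/ exists i, 1 <= i <= a - 1 /\ s = w i * a + i * d).
Proof.
split.
  move=> [[A [B [le_wA ->]]] not_shift].
  case: (ltnP (w B) A) => [lt_wA | le_Aw].
    by case: not_shift; exact: weighted_sub_a_overpaid.
  have eq_A : A = w B by lia.
  subst A.
  have [-> | B_gt0] := posnP B; first by left; rewrite w0.
  case: (ltnP B a) => [lt_Ba | le_aB]; first by right; exists B; split; first lia.
  by case: not_shift; exact: weighted_sub_a_large.
case=> [-> | [i [range_i ->]]].
  by split; [exists 0, 0; rewrite w0 | move=> [t [_]]; lia].
by split; [exists (w i), i | apply: weighted_apery_small; lia].
Qed.

End WeightedSemigroup.

Definition weight (B : nat) : nat := 4 * mu B + 3 * nu B + 2 * xi B.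

Lemma weight_decomp (B : nat) : B = xi B + 3 * nu B + 6 * mu B.
Proof. by rewrite /nu /xi /mu /qq; case: ifP => ?; lia. Qed.

(* The greedy decomposition is optimal: using c1 copies of 2a+d, c2 of
   3a+3d and c3 of 4a+6d costs at least the weight. *)
Lemma weight_min (c1 c2 c3 : nat) :
  weight (c1 + 3 * c2 + 6 * c3) <= 2 * c1 + 3 * c2 + 4 * c3.
Proof. by rewrite /weight /nu /xi /mu /qq; case: ifP => ?; lia. Qed.

(* 2B <= 3 weight B <= 2B + 11, whence the gap property for a >= 6. *)
Lemma weight_gap (a B B' : nat) :
  6 <= a -> B + a <= B' -> weight B < weight B'.
Proof. by rewrite /weight /nu /xi /mu /qq; do 2 case: ifP => ?; lia. Qed.

(* Γ_4 = S_weight: a combination c0, c1, c2, c3 of the generators has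
   d-coefficient c1 + 3c2 + 6c3, and conversely the greedy decomposition
   realises every admissible pair (A, B). *)
Lemma in_gamma4 (a d s : nat) :
  in_semigroup (gamma4 a d) s <-> weighted a d weight s.
Proof.
split.
  move=> [c ->]; rewrite /= !big_ord_recr big_ord0 /=.
  set c0 := c _; set c1 := c _; set c2 := c _; set c3 := c _.
  exists (c0 + 2 * c1 + 3 * c2 + 4 * c3), (c1 + 3 * c2 + 6 * c3); split.
    by have := weight_min c1 c2 c3; lia.
  lia.
move=> [A [B [le_wA ->]]].
exists (nth 0 [:: A - weight B; xi B; nu B; mu B]).
rewrite /= !big_ord_recr big_ord0 /=.
have := weight_decomp B; rewrite /weight in le_wA *; nia.
Qed.

Lemma apery_gamma4 (a d s : nat) :
  apery (gamma4 a d) a s <-> weighted_apery a d weight s.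
Proof.
rewrite /apery /weighted_apery.
split=> [[/in_gamma4 in_s no_shift] | [/in_gamma4 in_s no_shift]]; split=> //.
  by move=> [t [/in_gamma4 in_t eq_s]]; apply: no_shift; exists t.
by move=> [t [/in_gamma4 in_t eq_s]]; apply: no_shift; exists t.
Qed.

Theorem theorem2p2 (a d : nat) :
  0 < d -> 7 <= a -> coprime a d ->
  forall s : nat,
    apery (gamma4 a d) a s <->
    (s = 0 \/
     exists i : nat, 1 <= i <= a - 1 /\
       s = (4 * mu i + 3 * nu i + 2 * xi i) * a + i * d).
Proof.
move=> _ a_ge7 co_ad s.
have a_gt0 : 0 < a by lia.
have gap : forall B B', B + a <= B' -> weight B < weight B'.
  by move=> B B'; apply: weight_gap; lia.
apply: iff_trans (apery_gamma4 a d s) _.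
exact: (@apery_weighted a d weight a_gt0 co_ad (erefl 0) gap).
Qed.
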